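(* Let $M$ be a packed square matrix and $(M_1, M_2)$ be a column (resp. row) decomposition of $M$. Then, there is no integer $i$ such that the $i$th rows (resp. columns) of $M_1$ and $M_2$ contain both a nonzero entry.
   Context: Let $k \geq 1$, $A_k := \{0,1,\dots,k\}$. A ($k$-)packed matrix of size $n$ is an $n \times n$ matrix with entries in $A_k$ having at least one nonzero entry in each row and each column. The compression $\operatorname{cp}(M)$ of a matrix $M$ is the matrix obtained by deleting all null rows and columns of $M$. A tuple $(M_1,\dots,M_r)$ is a column decomposition of $M$ if $M$ is the horizontal juxtaposition $[M_1 | \cdots | M_r]$ and each $\operatorname{cp}(M_i)$ is a square matrix; it is a row decomposition of $M$ if $M$ is the vertical stacking of $M_1, \dots, M_r$ (from top to bottom) and each $\operatorname{cp}(M_i)$ is a square matrix. *)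

From HB Require Import structures.
From mathcomp Require Import all_boot all_order all_algebra.
Set Implicit Arguments. Unset Strict Implicit. Unset Printing Implicit Defensive.

(* Matrices with natural-number entries; entries in A_k = {0,...,k} are
   expressed by the bound  M i j <= k. *)

Definition null_row (m n : nat) (A : 'M[nat]_(m, n)) (i : 'I_m) : bool :=
  [forall j, A i j == 0%N].
Definition null_col (m n : nat) (A : 'M[nat]_(m, n)) (j : 'I_n) : bool :=
  [forall i, A i j == 0%N].

(* cp(A) is obtained by deleting null rows and columns; it has
   #(non-null rows) rows and #(non-null columns) columns. *)
Definition cp_nrows (m n : nat) (A : 'M[nat]_(m, n)) : nat :=
  #|[set i | ~~ null_row A i]|.
Definition cp_ncols (m n : nat) (A : 'M[nat]_(m, n)) : nat :=
  #|[set j | ~~ null_col A j]|.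
Definition cp_square (m n : nat) (A : 'M[nat]_(m, n)) : Prop :=
  cp_nrows A = cp_ncols A.

Definition packed (k n : nat) (M : 'M[nat]_n) : Prop :=
  (forall i j, M i j <= k)
  /\ (forall i, ~~ null_row M i)
  /\ (forall j, ~~ null_col M j).

Definition col_decomp (n n1 n2 : nat) (M : 'M[nat]_(n, n1 + n2))
  (M1 : 'M[nat]_(n, n1)) (M2 : 'M[nat]_(n, n2)) : Prop :=
  M = row_mx M1 M2 /\ cp_square M1 /\ cp_square M2.

Definition row_decomp (n n1 n2 : nat) (M : 'M[nat]_(n1 + n2, n))
  (M1 : 'M[nat]_(n1, n)) (M2 : 'M[nat]_(n2, n)) : Prop :=
  M = col_mx M1 M2 /\ cp_square M1 /\ cp_square M2.

From HB Require Import structures.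
From mathcomp Require Import all_boot all_order all_algebra.
From mathcomp Require Import zify.

Set Implicit Arguments.
Unset Strict Implicit.
Unset Printing Implicit Defensive.

(* In a column decomposition [M1 | M2] of a packed n x n matrix every column of
   M1 and of M2 is non-null, so cp(M1) and cp(M2) being square forces M1 to have
   n1 non-null rows and M2 to have n2 non-null rows.  As every row of M is
   non-null, these two sets of rows cover all n1 + n2 rows, hence they are
   disjoint.  Row decompositions reduce to column decompositions by
   transposition. *)

Lemma disjoint_of_cover_card (T : finType) (A B : {set T}) :
  A :|: B = setT -> #|A| + #|B| = #|T| -> A :&: B = set0.
Proof.
move=> covAB cardAB; apply/eqP; rewrite -cards_eq0.
by have := cardsUI A B; rewrite covAB cardsT cardAB; lia.
Qed.

Section NullLines.

Variables m n : nat.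
Implicit Type A : 'M[nat]_(m, n).

Lemma null_row_tr A (j : 'I_n) : null_row A^T j = null_col A j.
Proof. by apply: eq_forallb => i; rewrite mxE. Qed.

Lemma null_col_tr A (i : 'I_m) : null_col A^T i = null_row A i.
Proof. by apply: eq_forallb => j; rewrite mxE. Qed.

Lemma cp_square_tr A : cp_square A^T <-> cp_square A.
Proof.
rewrite /cp_square /cp_nrows /cp_ncols.
have -> : #|[set j | ~~ null_row A^T j]| = #|[set j | ~~ null_col A j]|.
  by apply: eq_card => j; rewrite !inE null_row_tr.
have -> : #|[set i | ~~ null_col A^T i]| = #|[set i | ~~ null_row A i]|.
  by apply: eq_card => i; rewrite !inE null_col_tr.
by split=> ->.
Qed.

Lemma cp_nrows_non_null_cols A :
  (forall j, ~~ null_col A j) -> cp_square A -> cp_nrows A = n.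
Proof.
move=> nonnull_cols ->; rewrite /cp_ncols -[RHS]card_ord.
by apply: eq_card => j; rewrite inE nonnull_cols.
Qed.

End NullLines.

Lemma packed_tr k n (M : 'M[nat]_n) : packed k M -> packed k M^T.
Proof.
move=> [bound [rows cols]]; split; first by move=> i j; rewrite mxE.
by split=> i; rewrite ?null_row_tr ?null_col_tr.
Qed.

Lemma row_decomp_tr n n1 n2 (M : 'M[nat]_(n1 + n2, n)) M1 M2 :
  row_decomp M M1 M2 -> col_decomp M^T M1^T M2^T.
Proof. by move=> [-> [sq1 sq2]]; split; [exact: tr_col_mx | split; apply/cp_square_tr]. Qed.

Section RowMx.

Variables m n1 n2 : nat.
Variables (A : 'M[nat]_(m, n1)) (B : 'M[nat]_(m, n2)).

Lemma null_row_row_mx i : null_row (row_mx A B) i = null_row A i && null_row B i.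
Proof.
apply/forallP/andP => [nullAB | [/forallP nullA /forallP nullB] j].
  by split; apply/forallP => j; [move: (nullAB (lshift n2 j)) | move: (nullAB (rshift n1 j))];
    rewrite ?row_mxEl ?row_mxEr.
by rewrite -(splitK j); case: (split j) => j' /=; rewrite ?row_mxEl ?row_mxEr.
Qed.

Lemma null_col_row_mxl j : null_col (row_mx A B) (lshift n2 j) = null_col A j.
Proof. by apply: eq_forallb => i; rewrite row_mxEl. Qed.

Lemma null_col_row_mxr j : null_col (row_mx A B) (rshift n1 j) = null_col B j.
Proof. by apply: eq_forallb => i; rewrite row_mxEr. Qed.

End RowMx.

Lemma col_decomp_rows_disjoint k n1 n2 (M : 'M[nat]_(n1 + n2))
    (M1 : 'M[nat]_(n1 + n2, n1)) (M2 : 'M[nat]_(n1 + n2, n2)) :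
  packed k M -> col_decomp M M1 M2 ->
  [set i | ~~ null_row M1 i] :&: [set i | ~~ null_row M2 i] = set0.
Proof.
move=> [_ [rows cols]] [eqM [sq1 sq2]]; subst M.
apply: disjoint_of_cover_card.
- by apply/setP => i; rewrite !inE -negb_and -null_row_row_mx rows.
- rewrite card_ord; congr addn.
  + by apply: cp_nrows_non_null_cols sq1 => j; rewrite -(null_col_row_mxl M1 M2).
  + by apply: cp_nrows_non_null_cols sq2 => j; rewrite -(null_col_row_mxr M1 M2).
Qed.

Theorem lemma1p1 (k : nat) (hk : 1 <= k) :
  (forall (n1 n2 : nat) (M : 'M[nat]_(n1 + n2))
          (M1 : 'M[nat]_(n1 + n2, n1)) (M2 : 'M[nat]_(n1 + n2, n2)),
      packed k M -> col_decomp M M1 M2 ->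
      ~ (exists i, ~~ null_row M1 i /\ ~~ null_row M2 i))
  /\
  (forall (n1 n2 : nat) (M : 'M[nat]_(n1 + n2))
          (M1 : 'M[nat]_(n1, n1 + n2)) (M2 : 'M[nat]_(n2, n1 + n2)),
      packed k M -> row_decomp M M1 M2 ->
      ~ (exists j, ~~ null_col M1 j /\ ~~ null_col M2 j)).
Proof.
have col_case n1 n2 (M : 'M[nat]_(n1 + n2)) M1 M2 :
    packed k M -> col_decomp M M1 M2 ->
    ~ (exists i, ~~ null_row M1 i /\ ~~ null_row M2 i).
  move=> packM decM [i [nonnull1 nonnull2]].
  have := col_decomp_rows_disjoint packM decM.
  by move/setP/(_ i); rewrite !inE nonnull1 nonnull2.
split; first exact: col_case.
move=> n1 n2 M M1 M2 packM decM [j nonnull].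
apply: (col_case _ _ _ _ _ (packed_tr packM) (row_decomp_tr decM)).
by exists j; rewrite !null_row_tr.
Qed.
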